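(* Let $f\colon\{0,\dots,n\}\to\mathbb{Z}$ be $\Delta_f$-near concave and $g\colon\{0,\dots,m\}\to\mathbb{Z}$ be $\Delta_g$-near concave. Then the max-plus convolution $h\colon\{0,\dots,n+m\}\to\mathbb{Z}$, $h(k)=\max_{i+j=k}f(i)+g(j)$, is $\max\{\Delta_f,\Delta_g\}$-near concave.
   Context: A function $F\colon\{0,\dots,n\}\to\mathbb{Q}$ is convex if $F(i)-F(i-1)\le F(i+1)-F(i)$ for all $1\le i\le n-1$, and concave if $-F$ is convex. For $\Delta\ge 0$, $f\colon\{0,\dots,n\}\to\mathbb{Z}$ is $\Delta$-near concave if there is a concave $\hat f\colon\{0,\dots,n\}\to\mathbb{Q}$ with $\hat f(i)-\Delta\le f(i)\le \hat f(i)$ for all $i$. *)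

From mathcomp Require Import all_boot all_order all_algebra.
Set Implicit Arguments. Unset Strict Implicit. Unset Printing Implicit Defensive.
Import Order.TTheory GRing.Theory Num.Theory.
Local Open Scope ring_scope.

(* Functions on {0,...,n} are modelled as total functions nat -> _ whose
   values outside {0,...,n} are irrelevant. *)

Definition concave_on (n : nat) (F : nat -> rat) : Prop :=
  forall i : nat, (1 <= i)%N -> (i + 1 <= n)%N ->
    F (i + 1)%N - F i <= F i - F (i - 1)%N.

Definition near_concave (n : nat) (Delta : rat) (f : nat -> int) : Prop :=
  exists fh : nat -> rat, concave_on n fh /\
    forall i : nat, (i <= n)%N -> fh i - Delta <= (f i)%:~R <= fh i.

(* The big max is seeded with the admissible term
   i = minn k n, so it equals the true maximum whenever k <= n+m. *)
Definition maxplus_conv (n m : nat) (f g : nat -> int) (k : nat) : int :=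
  \big[Num.max/ f (minn k n) + g (k - minn k n)%N]_(i < k.+1 | (i <= n)%N && (k - i <= m)%N)
     (f i + g (k - i)%N).

From mathcomp Require Import all_boot all_order all_algebra.
From mathcomp Require Import lra zify.
Import Order.TTheory GRing.Theory Num.Theory.

Local Open Scope ring_scope.

(* The given concave majorants of f and g are replaced by the least ones, the upper
   concave hulls F and G.  A hull is tight: at every point it either touches the
   function or is affine there.  Tightness makes the hull minimal among concave
   majorants (a discrete maximum principle), so F - Df <= f <= F and G - Dg <= g <= G.
   The max-plus convolution H of F and G is concave, because a concave sequence only
   grows when two arguments are moved towards each other with fixed sum.  Finally,
   let i be the LAST index realising H k = F i + G (k - i).  If neither F nor G were
   tight at i and k - i, both would be affine there with equal slopes, and i + 1 would
   realise H k as well.  So H k <= h k + Dg or H k <= h k + Df, while h <= H is clear.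

   The hull is built one point at a time: the hull on {0..n} is continued by the
   least steep line through (n+1, f (n+1)) lying above it (Andrew's chain). *)

Lemma concave_onE n (C : nat -> rat) :
  concave_on n C <-> forall i, (0 < i < n)%N -> C i.+1 - C i <= C i - C i.-1.
Proof.
split=> [hC i /andP[i_gt0 i_lt_n] | hC i i_ge1 i_le_n].
  by have := hC i i_gt0 ltac:(lia); rewrite addn1 subn1.
by rewrite addn1 subn1; apply: hC; lia.
Qed.

Section ConcaveIncrements.
Variables (n : nat) (C : nat -> rat).
Hypothesis concC : concave_on n C.

Lemma concave_increment_le x y : (x <= y)%N -> (y < n)%N ->
  C y.+1 - C y <= C x.+1 - C x.
Proof.
move=> le_xy; rewrite -(subnKC le_xy).
elim: (y - x)%N => [|d IHd] lt_dn; first by rewrite addn0.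
apply: le_trans (IHd ltac:(lia)).
by rewrite addnS; apply: (concave_onE n C).1 => //; lia.
Qed.

Lemma concave_diff_le x y d : (x <= y)%N -> (y + d <= n)%N ->
  C (y + d)%N - C y <= C (x + d)%N - C x.
Proof.
move=> le_xy le_n; elim: d le_n => [|d IHd] le_n; first by rewrite !addn0 !subrr.
have := IHd ltac:(lia); have := concave_increment_le (x + d) (y + d) ltac:(lia) ltac:(lia).
rewrite !addnS; lra.
Qed.

Lemma concave_pair_le x y u v : (x <= n)%N -> (y <= n)%N ->
  (minn x y <= u <= maxn x y)%N -> (u + v = x + y)%N ->
  C x + C y <= C u + C v.
Proof.
move=> xn yn u_mid uv.
wlog le_xy : x y xn yn u_mid uv / (x <= y)%N => [hwlog|].
  have [/hwlog|/ltnW le_yx] := leqP x y; first exact.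
  rewrite addrC; apply: hwlog => //; first by rewrite minnC maxnC.
  by rewrite [(y + x)%N]addnC.
move: u_mid; rewrite (minn_idPl le_xy) (maxn_idPr le_xy) => /andP[xu uy].
have := concave_diff_le x v (u - x) ltac:(lia) ltac:(lia).
have -> : (v + (u - x))%N = y by lia.
have -> : (x + (u - x))%N = u by lia.
lra.
Qed.

End ConcaveIncrements.

Lemma last_maximizer {R : realDomainType} (phi : nat -> R) {lo hi : nat} : (lo <= hi)%N ->
  exists a, [/\ (lo <= a <= hi)%N,
    forall t, (lo <= t <= hi)%N -> phi t <= phi a &
    forall t, (a < t <= hi)%N -> phi t < phi a].
Proof.
move=> le_lohi; rewrite -(subnKC le_lohi).
elim: (hi - lo)%N => [|d [a [a_in a_max a_last]]].
  exists lo; rewrite addn0; split=> [|t t_in|t t_in]; [lia | | lia].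
  by have -> : t = lo by lia.
have [le_phi|lt_phi] := leP (phi a) (phi (lo + d.+1)%N).
  exists (lo + d.+1)%N; split; [lia | | lia].
  move=> t /andP[t_ge t_le]; have [t_eq|t_lt] := eqVneq t (lo + d.+1)%N; first by rewrite t_eq.
  by apply: le_trans le_phi; apply: a_max; lia.
exists a; split; [lia | |].
  move=> t /andP[t_ge t_le]; have [t_eq|t_lt] := eqVneq t (lo + d.+1)%N; first by rewrite t_eq ltW.
  by apply: a_max; lia.
move=> t /andP[a_lt t_le]; have [t_eq|t_lt] := eqVneq t (lo + d.+1)%N; first by rewrite t_eq.
by apply: a_last; lia.
Qed.

Definition tight_on (n : nat) (f E : nat -> rat) : Prop :=
  forall i, (i <= n)%N -> E i = f i \/ (0 < i < n)%N /\ E i.+1 - E i = E i - E i.-1.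

(* A tight function lies below every concave majorant C of f: at the last
   maximizer of E - C the gap is nonpositive, since E touches f there or else
   E - C would be convex around it and not decrease afterwards. *)
Lemma tight_le_concave n (f E C : nat -> rat) :
  concave_on n C -> (forall i, (i <= n)%N -> f i <= C i) -> tight_on n f E ->
  forall i, (i <= n)%N -> E i <= C i.
Proof.
move=> concC f_le_C tightE.
have [a [/andP[_ a_le_n] a_max a_last]] := last_maximizer (fun t => E t - C t) (leq0n n).
suff gap_le0 : E a - C a <= 0 by move=> i i_le_n; have := a_max i ltac:(lia); lra.
case: (tightE a a_le_n) => [-> | [a_inner affine_a]]; first by rewrite subr_le0 f_le_C.
have := a_last a.+1 ltac:(lia); have := a_max a.-1 ltac:(lia).
have := (concave_onE n C).1 concC a a_inner; lra.
Qed.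

Section HullStep.
Variables (n : nat) (f E : nat -> rat).
Hypotheses (concE : concave_on n E) (f_le_E : forall i, (i <= n)%N -> f i <= E i).
Hypothesis tightE : tight_on n f E.

(* Among the lines through (n+1, f (n+1)), the one of least slope from a point of E
   stays above E on {0..n} and touches it at some a. *)
Lemma supporting_line : exists a s, [/\ (a <= n)%N,
  forall t, (t <= n)%N -> E t + (n.+1 - t)%:R * s <= f n.+1 &
  E a + (n.+1 - a)%:R * s = f n.+1].
Proof.
pose slope t := (f n.+1 - E t) / (n.+1 - t)%:R.
have slopeE t : (t <= n)%N -> (n.+1 - t)%:R * slope t = f n.+1 - E t.
  by move=> t_le_n; rewrite mulrC divfK // pnatr_eq0; lia.
have [a [/andP[_ a_le_n] a_min _]] := last_maximizer (fun t => - slope t) (leq0n n).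
exists a, (slope a); split; [exact: a_le_n | | by rewrite slopeE // addrC subrK].
move=> t t_le_n; rewrite -lerBrDl -slopeE //.
by apply: ler_wpM2l => //; rewrite -lerN2; apply: a_min; lia.
Qed.

Section Extension.
Variables (a : nat) (s : rat).
Hypotheses (a_le_n : (a <= n)%N)
  (E_below : forall t, (t <= n)%N -> E t + (n.+1 - t)%:R * s <= f n.+1)
  (E_touch : E a + (n.+1 - a)%:R * s = f n.+1).

Let line t := f n.+1 - (n.+1 - t)%:R * s.
Let E' t := if (t <= a)%N then E t else line t.

Lemma line_step t : (t <= n)%N -> line t.+1 = line t + s.
Proof.
move=> t_le_n; rewrite /line (_ : (n.+1 - t = (n.+1 - t.+1).+1)%N); last by lia.
by rewrite -natr1; lra.
Qed.

Lemma line_last : line n.+1 = f n.+1.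
Proof. by rewrite /line subnn mul0r subr0. Qed.

Lemma extension_line t : (a <= t)%N -> E' t = line t.
Proof.
move=> a_le_t; rewrite /E' /line; case: (leqP t a) => [t_le_a | //].
have -> : t = a by lia.
by rewrite -E_touch addrK.
Qed.

Lemma extension_step t : (a <= t <= n)%N -> E' t.+1 = E' t + s.
Proof. by move=> /andP[a_le_t t_le_n]; rewrite !extension_line ?line_step //; lia. Qed.

Lemma slope_below_left : (0 < a)%N -> s <= E a - E a.-1.
Proof.
move=> a_gt0; have := E_below a.-1 ltac:(lia); move: E_touch.
rewrite (_ : (n.+1 - a.-1 = (n.+1 - a).+1)%N); last by lia.
by rewrite -natr1; lra.
Qed.

Lemma extension_above t : (t <= n.+1)%N -> f t <= E' t.
Proof.
move=> t_le; have [t_le_a | a_lt_t] := leqP t a.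
  by rewrite /E' t_le_a; apply: f_le_E; lia.
rewrite extension_line; last by lia.
have [t_le_n | t_gt_n] := leqP t n.
  by have := E_below t t_le_n; have := f_le_E t t_le_n; rewrite /line; lra.
have -> : t = n.+1 by lia.
by rewrite line_last.
Qed.

Lemma extension_affine_right i : (a < i <= n)%N -> E' i.+1 - E' i = E' i - E' i.-1.
Proof.
move=> /andP[a_lt_i i_le_n].
have := extension_step i.-1 ltac:(lia); rewrite (ltn_predK a_lt_i).
by have := extension_step i ltac:(lia); lra.
Qed.

(* E' is concave: at the contact point the slope can only drop to s. *)
Lemma extension_concave : concave_on n.+1 E'.
Proof.
apply/concave_onE => i /andP[i_gt0 i_lt].
have [i_lt_a | a_le_i] := ltnP i a.
  rewrite /E' !ifT; try lia.
  by apply: (concave_onE n E).1; rewrite ?i_gt0 //; lia.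
have [a_lt_i | i_eq_a] := ltnP a i.
  by rewrite extension_affine_right ?lexx //; lia.
have -> : i = a by lia.
rewrite extension_step; last by lia.
rewrite /E' leqnn ifT; last by lia.
by have := slope_below_left ltac:(lia); lra.
Qed.

(* If E is affine at the contact point, its slope there is s, so E' is affine too. *)
Lemma extension_affine_at_touch : (0 < a < n)%N -> E a.+1 - E a = E a - E a.-1 ->
  E' a.+1 - E' a = E' a - E' a.-1.
Proof.
move=> a_inner affine_a.
have E'a : E' a = E a by rewrite /E' leqnn.
have E'a1 : E' a.+1 = E a + s by rewrite extension_step ?E'a //; lia.
have := E_below a.+1 ltac:(lia); have := slope_below_left ltac:(lia); move: E_touch.
rewrite E'a E'a1 /E' ifT; last by lia.
have -> : (n.+1 - a = (n.+1 - a.+1).+1)%N by lia.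
by rewrite -natr1; lra.
Qed.

Lemma extension_tight : tight_on n.+1 f E'.
Proof.
move=> i i_le.
have [i_lt_a | a_le_i] := ltnP i a.
  have E'i : E' i = E i by rewrite /E' ifT //; lia.
  case: (tightE i ltac:(lia)) => [touch | [i_inner affine_i]]; first by left; rewrite E'i.
  by right; rewrite E'i /E' !ifT; try lia; split=> //; lia.
have [a_lt_i | i_eq_a] := ltnP a i.
  have [i_le_n | i_gt_n] := leqP i n.
    by right; split; [lia | apply: extension_affine_right; lia].
  have -> : i = n.+1 by lia.
  by left; rewrite extension_line ?line_last //; lia.
have -> : i = a by lia.
case: (tightE a a_le_n) => [touch | [a_inner affine_a]]; first by left; rewrite /E' leqnn.
by right; split; [lia | exact: extension_affine_at_touch].
Qed.

End Extension.

Lemma hull_step : exists E', [/\ concave_on n.+1 E',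
  forall i, (i <= n.+1)%N -> f i <= E' i & tight_on n.+1 f E'].
Proof.
have [a [s [a_le_n E_below E_touch]]] := supporting_line.
exists (fun t => if (t <= a)%N then E t else f n.+1 - (n.+1 - t)%:R * s).
by split; [apply: extension_concave | apply: extension_above | apply: extension_tight].
Qed.

End HullStep.

Lemma concave_hull n (f : nat -> rat) : exists E, [/\ concave_on n E,
  forall i, (i <= n)%N -> f i <= E i & tight_on n f E].
Proof.
elim: n => [|n [E [concE f_le_E tightE]]]; last exact: hull_step concE f_le_E tightE.
exists f; split=> [i i_ge1 i_le0 | i _ | i _]; [lia | exact: lexx | by left].
Qed.

Lemma near_concave_tight_hull n (Delta : rat) (f : nat -> int) :
  near_concave n Delta f -> exists E, [/\ concave_on n E,
    tight_on n (fun i => (f i)%:~R) E &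
    forall i, (i <= n)%N -> E i - Delta <= (f i)%:~R <= E i].
Proof.
move=> [fh [concfh f_near_fh]].
have [E [concE f_le_E tightE]] := concave_hull n (fun i => (f i)%:~R).
have E_le_fh := tight_le_concave n _ E fh concfh
  (fun i i_le_n => proj2 (andP (f_near_fh i i_le_n))) tightE.
exists E; split=> // i i_le_n; rewrite f_le_E // andbT.
by have := E_le_fh i i_le_n; have /andP[] := f_near_fh i i_le_n; lra.
Qed.

Definition maxconv {R : realDomainType} (n m : nat) (F G : nat -> R) (k : nat) : R :=
  \big[Num.max/ F (minn k n) + G (k - minn k n)%N]_(i < k.+1 | (i <= n)%N && (k - i <= m)%N)
     (F i + G (k - i)%N).

Lemma maxplus_convE n m f g : maxplus_conv n m f g = maxconv n m f g.
Proof. by []. Qed.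

Section MaxConvolution.
Context {R : realDomainType} (n m : nat) (F G : nat -> R).

Lemma maxconv_ub k i : (i <= k)%N -> (i <= n)%N -> (k - i <= m)%N ->
  F i + G (k - i)%N <= maxconv n m F G k.
Proof.
move=> i_le_k i_le_n ki_le_m.
have := @le_bigmax_cond _ _ _ _ (Ordinal (i_le_k : (i < k.+1)%N))
  (fun j : 'I_k.+1 => (j <= n)%N && (k - j <= m)%N) (fun j : 'I_k.+1 => F j + G (k - j)%N).
by apply; rewrite /= i_le_n ki_le_m.
Qed.

Lemma maxconv_attained k : (k <= n + m)%N -> exists i, [/\ (i <= k)%N, (i <= n)%N,
  (k - i <= m)%N & maxconv n m F G k = F i + G (k - i)%N].
Proof.
move=> k_le; rewrite /maxconv.
elim/big_ind: _ => [| x y [i [? ? ? ->]] [j [? ? ? ->]] | j /andP[j_le_n kj_le_m]].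
- by exists (minn k n); split=> //; lia.
- by case: leP => _; [exists j | exists i].
- by exists j; split=> //; rewrite -ltnS.
Qed.

End MaxConvolution.

(* The max-plus convolution of concave sequences is concave: the optimal splits of
   k - 1 and k + 1 are averaged into two splits of k. *)
Lemma maxconv_concave n m (F G : nat -> rat) : concave_on n F -> concave_on m G ->
  concave_on (n + m) (maxconv n m F G).
Proof.
move=> concF concG; apply/concave_onE => k /andP[k_gt0 k_lt].
have [i1 [? ? ? ->]] := maxconv_attained n m F G k.-1 ltac:(lia).
have [i2 [? ? ? ->]] := maxconv_attained n m F G k.+1 ltac:(lia).
pose u := ((i1 + i2) %/ 2)%N; pose v := (i1 + i2 - u)%N.
have := concave_pair_le n F concF i1 i2 u v ltac:(lia) ltac:(lia) ltac:(lia) ltac:(lia).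
have := concave_pair_le m G concG (k.-1 - i1) (k.+1 - i2) (k - u) (k - v)
  ltac:(lia) ltac:(lia) ltac:(lia) ltac:(lia).
have := maxconv_ub n m F G k u ltac:(lia) ltac:(lia) ltac:(lia).
have := maxconv_ub n m F G k v ltac:(lia) ltac:(lia) ltac:(lia).
lra.
Qed.

(* For tight F and G, maxconv k is realised at a split where F or G is tight:
   take the last optimal split; if both were affine there, their slopes would agree
   and the next split would be optimal too. *)
Lemma maxconv_tight_attained n m (phi psi F G : nat -> rat) k :
  tight_on n phi F -> tight_on m psi G -> (k <= n + m)%N ->
  exists i, [/\ (i <= k)%N, (i <= n)%N, (k - i <= m)%N,
    maxconv n m F G k = F i + G (k - i)%N & F i = phi i \/ G (k - i)%N = psi (k - i)%N].
Proof.
move=> tightF tightG k_le.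
have lo_le_hi : (k - m <= minn k n)%N by lia.
have [a [/andP[lo_le_a a_le_hi] a_max a_last]] :=
  last_maximizer (fun i => F i + G (k - i)%N) lo_le_hi.
have a_attains : maxconv n m F G k = F a + G (k - a)%N.
  apply/le_anti; rewrite maxconv_ub ?andbT; try lia.
  have [i [? ? ? ->]] := maxconv_attained n m F G k k_le.
  by apply: a_max; lia.
exists a; split; try lia; first exact: a_attains.
case: (tightF a ltac:(lia)) => [| [a_inner affineF]]; first by left.
case: (tightG (k - a)%N ltac:(lia)) => [| [ka_inner affineG]]; first by right.
have := a_last a.+1 ltac:(lia); have := a_max a.-1 ltac:(lia).
have -> : (k - a.-1 = (k - a).+1)%N by lia.
have -> : (k - a.+1 = (k - a).-1)%N by lia.
move: affineF affineG.
lra.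
Qed.

Theorem mainTheorem5 (n m : nat) (f g : nat -> int) (Df Dg : rat) :
  0 <= Df -> 0 <= Dg ->
  near_concave n Df f -> near_concave m Dg g ->
  near_concave (n + m) (Num.max Df Dg) (maxplus_conv n m f g).
Proof.
move=> _ _ /near_concave_tight_hull[F [concF tightF boundsF]]
  /near_concave_tight_hull[G [concG tightG boundsG]].
exists (maxconv n m F G); split; first exact: maxconv_concave.
move=> k k_le; rewrite maxplus_convE.
have [j [j_le_k j_le_n kj_le_m h_eq]] := maxconv_attained n m f g k k_le.
have [i [i_le_k i_le_n ki_le_m H_eq tight_i]] :=
  maxconv_tight_attained n m _ _ F G k tightF tightG k_le.
have h_ge_i : ((f i)%:~R + (g (k - i)%N)%:~R : rat) <= (maxconv n m f g k)%:~R.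
  by rewrite -intrD ler_int maxconv_ub.
have H_ge_j := maxconv_ub n m F G k j j_le_k j_le_n kj_le_m.
have Df_le : Df <= Num.max Df Dg by rewrite le_max lexx.
have Dg_le : Dg <= Num.max Df Dg by rewrite le_max lexx orbT.
have /andP[Fi_lo _] := boundsF i i_le_n; have /andP[Gi_lo _] := boundsG (k - i)%N ki_le_m.
have /andP[_ Fj_up] := boundsF j j_le_n; have /andP[_ Gj_up] := boundsG (k - j)%N kj_le_m.
rewrite H_eq h_eq intrD in H_ge_j h_ge_i *.
by case: tight_i => touch; lra.
Qed.
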